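(* If the toric algebra $A_{\mathscr{E}}$ is consistent, then $\ker(\pi)$ equals the subgroup $L\subseteq\mathbb{Z}^{Q_1}$ generated by the vectors $v(p^+)-v(p^-)$ for which there is $q\in\mathscr{P}$ with $\partial_qW=p^++p^-$; that is, the quotient map $\operatorname{wt}:\mathbb{Z}^{Q_1}\to\Lambda=\mathbb{Z}^{Q_1}/L$ coincides with $\pi:\mathbb{Z}^{Q_1}\to\mathbb{Z}(Q)$. In particular, $A_{\mathscr{E}}$ is graded by the semigroup $\Lambda_+=\operatorname{wt}(\mathbb{N}^{Q_1})=\mathbb{N}(Q)$, a path $p$ having degree $\pi(v(p))$.
   Context: Let $\mathbb{k}$ be an algebraically closed field and $X=\operatorname{Spec}R$ a normal affine toric variety of dimension $n$ with a torus-fixed point, $R=\mathbb{k}[\sigma^\vee\cap M]$, $\sigma\subset N\otimes\mathbb{R}$ strongly convex rational polyhedral. Let $\sigma(1)$ be the rays, $d=|\sigma(1)|$, $v_\rho$ primitive generators, $D_\rho$ toric prime divisors, torus-invariant divisors identified with $\mathbb{Z}^d$, $\deg:\mathbb{Z}^d\to\operatorname{Cl}(X)$ the class map. Cox ring $\mathbb{k}[x_\rho]$, $x^D=\prod x_\rho^{D_\rho}$. Assume $X$ is Gorenstein: $(1,\dots,1)\in\mathbb{Z}^d$ lies in the image of $M$ under $u\mapsto\sum\langle u,v_\rho\rangle D_\rho$. Let $\mathscr{E}=(E_0=\mathcal{O}_X,E_1,\dots,E_r)$ be pairwise distinct rank one reflexive sheaves, $E_i=\mathcal{O}_X(D_i')$,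 and $Q$ its quiver of sections: vertices $0,\dots,r$; an arrow $a:i\to j$ with label $\operatorname{div}(a)\in\mathbb{N}^d$ for each irreducible $T_M$-invariant section $x^{\operatorname{div}(a)}$ of $\operatorname{Hom}(E_i,E_j)\cong H^0(\mathcal{O}_X(D_j'-D_i'))$ (irreducible: not in the image of multiplication through any $E_k$, $k\neq i,j$). Paths compose right to left; $\operatorname{div}(p)$ is the sum of labels of arrows of $p$; $v(p)=\sum_a(\text{number of times }a\text{ occurs in }p)\chi_a\in\mathbb{Z}^{Q_1}$. $J_{\mathscr{E}}$ is generated by $p^+-p^-$ over pairs of paths with equal head, tail and label; $A_{\mathscr{E}}=\mathbb{k}Q/J_{\mathscr{E}}$. A cycle $p$ is anticanonical if $x^{\operatorname{div}(p)}=\prod_\rho x_\rho$. For a path $q$, $\partial_qW$ is the sum of all paths $p$ such that $pq$ is an anticanonical cycle. $\mathscr{P}$ is the set of paths $q$ with $\partial_qW$ a sum of precisely two paths sharing neither initial nor final arrow; $J_W$ is generated by $p^+-p^-$ whenever $\partial_qW=p^++p^-$, $q\in\mathscr{P}$. $A_{\mathscr{E}}$ is consistent if $J_W=J_{\mathscr{E}}$. $\operatorname{Wt}(Q)=\{\theta\in\mathbb{Z}^{Q_0}:\sum\theta_i=0\}$; $\pi:\mathbb{Z}^{Q_1}\to\operatorname{Wt}(Q)\oplus\mathbb{Z}^d$, $\chi_a\mapsto(\chi_{\mathsf{h}(a)}-\chi_{\mathsf{t}(a)},\operatorname{div}(a))$; $\mathbb{Z}(Q)=\pi(\mathbb{Z}^{Q_1})$,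 $\mathbb{N}(Q)=\pi(\mathbb{N}^{Q_1})$. *)

From mathcomp Require Import all_boot all_order all_algebra.
Set Implicit Arguments. Unset Strict Implicit. Unset Printing Implicit Defensive.
Import Order.TTheory GRing.Theory Num.Theory.
Local Open Scope ring_scope.

(* Toric data: N = M = Z^n, rays v_rho (rho < d), the cone sigma is    *)
(* the cone spanned by the v_rho.                                      *)
Section Toric.
Variables (n d : nat) (v : 'I_d -> 'I_n -> int).

Definition pairing (u : 'I_n -> int) (rho : 'I_d) : int :=
  \sum_(i < n) u i * v rho i.

Definition primitive_vec (w : 'I_n -> int) : Prop :=
  forall m : int, 0 < m -> (forall i, (m %| w i)%Z) -> m = 1.

(* sigma /\ -sigma = {0} *)
Definition strongly_convex : Prop :=
  forall c : 'I_d -> rat, (forall rho, 0 <= c rho) ->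
    (forall i, \sum_(rho < d) c rho * (v rho i)%:~R = 0) ->
    forall rho, c rho = 0.

(* every v_rho spans an extremal ray (so the v_rho are exactly the rays) *)
Definition extremal_rays : Prop :=
  forall rho : 'I_d, ~ exists c : 'I_d -> rat,
    [/\ forall r, 0 <= c r, c rho = 0 &
        forall i, (v rho i)%:~R = \sum_(r < d) c r * (v r i)%:~R].

(* sigma is full dimensional (X has a torus-fixed point) *)
Definition full_dim : Prop :=
  forall u : 'I_n -> int, (forall rho, pairing u rho = 0) -> forall i, u i = 0.

Definition toric_cone_data : Prop :=
  [/\ forall rho, primitive_vec (v rho), strongly_convex, extremal_rays & full_dim].

(* (1,...,1) is the divisor of a character u in M *)
Definition gorenstein : Prop := exists u, forall rho, pairing u rho = 1.

(* torus-invariant divisors are Z^d; D ~ D' iff D - D' = div(chi^u) *)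
Definition lin_equiv (D D' : 'I_d -> int) : Prop :=
  exists u, forall rho, D rho = D' rho + pairing u rho.

(* x^E is a T_M-invariant section of O_X(D): E effective, E ~ D *)
Definition is_section (D : 'I_d -> int) (E : 'I_d -> nat) : Prop :=
  exists u, forall rho, (E rho)%:Z = D rho + pairing u rho.

Variables (r : nat) (D' : 'I_r.+1 -> 'I_d -> int).

(* E_0 = O_X and the E_i pairwise distinct (non-isomorphic) *)
Definition collection_ok : Prop :=
  lin_equiv (D' ord0) (fun _ => 0) /\
  forall i j, i != j -> ~ lin_equiv (D' i) (D' j).

(* sections of Hom(E_i, E_j) = H^0(O_X(D'_j - D'_i)) *)
Definition hom_section (i j : 'I_r.+1) (E : 'I_d -> nat) : Prop :=
  is_section (fun rho => D' j rho - D' i rho) E.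

(* irreducible T_M-invariant section (identities, i.e. label 0, excluded) *)
Definition irreducible_section (i j : 'I_r.+1) (E : 'I_d -> nat) : Prop :=
  [/\ hom_section i j E, exists rho, E rho != 0%N &
      ~ exists k, [/\ k != i, k != j & exists E1 E2,
          [/\ hom_section i k E1, hom_section k j E2 &
              forall rho, E rho = (E1 rho + E2 rho)%N]]].

Variables (Q1 : finType) (hd tl : Q1 -> 'I_r.+1) (dv : Q1 -> 'I_d -> nat).

Definition is_quiver_of_sections : Prop :=
  [/\ forall a, irreducible_section (tl a) (hd a) (dv a),
      forall i j E, irreducible_section i j E ->
        exists a, [/\ tl a = i, hd a = j & forall rho, dv a rho = E rho] &
      forall a b, tl a = tl b -> hd a = hd b ->
        (forall rho, dv a rho = dv b rho) -> a = b].

End Toric.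

Section Paths.
Variables (r d : nat) (Q1 : finType) (hd tl : Q1 -> 'I_r.+1)
  (dv : Q1 -> 'I_d -> nat).

(* a path = (tail vertex, arrows in the order traversed) *)
Definition qpath := ('I_r.+1 * seq Q1)%type.

Fixpoint chain (x : 'I_r.+1) (s : seq Q1) : bool :=
  if s is a :: s' then (tl a == x) && chain (hd a) s' else true.

Definition validp (p : qpath) : bool := chain p.1 p.2.
Definition ptail (p : qpath) : 'I_r.+1 := p.1.
Definition phead (p : qpath) : 'I_r.+1 := last p.1 [seq hd a | a <- p.2].
Definition pdiv (p : qpath) (rho : 'I_d) : nat := (\sum_(a <- p.2) dv a rho)%N.

(* composite pq (first q, then p); None if not composable *)
Definition pcomp (p q : qpath) : option qpath :=
  if phead q == ptail p then Some (ptail q, q.2 ++ p.2) else None.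

Definition anticanonical_cycle (c : qpath) : Prop :=
  [/\ validp c, phead c = ptail c & forall rho, pdiv c rho = 1%N].

(* p occurs in d_q W *)
Definition in_dW (q p : qpath) : Prop :=
  exists c, pcomp p q = Some c /\ anticanonical_cycle c.

Definition initial_arrow (p : qpath) : option Q1 := ohead p.2.
Definition final_arrow (p : qpath) : option Q1 := ohead (rev p.2).

(* q in P and d_q W = p1 + p2 *)
Definition dW_pair (q p1 p2 : qpath) : Prop :=
  [/\ validp q, validp p1, validp p2 & p1 <> p2] /\
  (forall p, validp p -> (in_dW q p <-> p = p1 \/ p = p2)) /\
  initial_arrow p1 <> initial_arrow p2 /\
  final_arrow p1 <> final_arrow p2.

(* generating binomials of J_E and J_W *)
Definition gensE (s : qpath * qpath) : Prop :=
  [/\ validp s.1, validp s.2, ptail s.1 = ptail s.2, phead s.1 = phead s.2 &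
      forall rho, pdiv s.1 rho = pdiv s.2 rho].
Definition gensW (s : qpath * qpath) : Prop := exists q, dW_pair q s.1 s.2.

(* path algebra kQ: elements are k-valued functions on paths; the
   two-sided ideal generated by binomials p+ - p- (s in S) consists of the
   finite sums  sum c * u (p+ - p-) w  with u, w paths. *)
Variable k : fieldType.

Definition mul3 (u s w : qpath) : option qpath := obind (pcomp u) (pcomp s w).

Definition ind_opt (o : option qpath) (x : qpath) : k :=
  if o is Some y then (y == x)%:R else 0.

Definition binom_term (s : qpath * qpath) (u w : qpath) (x : qpath) : k :=
  ind_opt (mul3 u s.1 w) x - ind_opt (mul3 u s.2 w) x.

Definition in_ideal (S : qpath * qpath -> Prop) (f : qpath -> k) : Prop :=
  exists l : seq (k * qpath * (qpath * qpath) * qpath),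
    (forall t, t \in l -> [/\ validp t.1.1.2, S t.1.2 & validp t.2]) /\
    forall x, f x = \sum_(t <- l) t.1.1.1 * binom_term t.1.2 t.1.1.2 t.2 x.

Definition consistent : Prop :=
  forall f : qpath -> k, in_ideal gensW f <-> in_ideal gensE f.

Definition vpath (p : qpath) : {ffun Q1 -> int} :=
  [ffun a => (count_mem a p.2)%:Z].

(* ker(pi), pi : Z^{Q1} -> Wt(Q) (+) Z^d *)
Definition in_ker_pi (x : {ffun Q1 -> int}) : Prop :=
  (forall i : 'I_r.+1,
     \sum_(a : Q1) x a * ((hd a == i)%:R - (tl a == i)%:R) = 0 :> int) /\
  (forall rho : 'I_d, \sum_(a : Q1) x a * (dv a rho)%:Z = 0).

Inductive in_L : {ffun Q1 -> int} -> Prop :=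
  | L0 : in_L 0
  | LD x y : in_L x -> in_L y -> in_L (x + y)
  | LN x : in_L x -> in_L (- x)
  | Lgen q p1 p2 : dW_pair q p1 p2 -> in_L (vpath p1 - vpath p2).

End Paths.

(* An element x of ker(pi) has zero boundary, so after fixing walks from and to the
   vertex 0 (the quiver of sections is strongly connected: every sheaf Hom has a
   section by the Gorenstein hypothesis, and a section factors through irreducible
   ones) x is a difference v(c) - v(c') of two cycles at 0.  As x has zero label
   part, c and c' carry the same divisor, so c - c' lies in J_E = J_W.  Finally, the
   linear form "sum of the coefficients of the paths p' with v(p) - v(p') in L"
   vanishes on J_W, since each generator p+ - p- of J_W moves paths inside one
   L-class; evaluating it on c - c' shows that c' lies in the L-class of c.
   The converse inclusion holds because p+ and p- share head, tail and label. *)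

From Pilot Require Import Defs.
From mathcomp Require Import all_boot all_order all_algebra.
From Stdlib Require Import Classical ClassicalEpsilon.
From mathcomp Require Import zify ring lra.
Set Implicit Arguments. Unset Strict Implicit. Unset Printing Implicit Defensive.
Import Order.TTheory GRing.Theory Num.Theory.
Local Open Scope ring_scope.

Lemma sum_mul_eq (T : finType) (f : T -> int) (j : T) :
  \sum_i f i * (i == j)%:R = f j.
Proof.
under eq_bigr do rewrite mulr_natr mulrb.
by rewrite -big_mkcond big_pred1_eq.
Qed.

Lemma ffunBE (T : finType) (V : zmodType) (f g : {ffun T -> V}) x :
  (f - g) x = f x - g x.
Proof. by rewrite !ffunE. Qed.

Section Walks.
Variables (r d : nat) (Q1 : finType) (hd tl : Q1 -> 'I_r.+1)
  (dv : Q1 -> 'I_d -> nat).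

Definition walk (i : 'I_r.+1) (s : seq Q1) (j : 'I_r.+1) : bool :=
  chain hd tl i s && (last i [seq hd a | a <- s] == j).

Lemma chain_cat i s1 s2 : chain hd tl i (s1 ++ s2) =
  chain hd tl i s1 && chain hd tl (last i [seq hd a | a <- s1]) s2.
Proof. by elim: s1 i => [|a s IH] i //=; rewrite IH andbA. Qed.

Lemma walk_cat i j l s1 s2 : walk i s1 j -> walk j s2 l -> walk i (s1 ++ s2) l.
Proof.
by rewrite /walk chain_cat map_cat last_cat => /andP[-> /eqP->] /andP[-> ->].
Qed.

Lemma walk_validp i s j : walk i s j -> validp hd tl (i, s) /\ phead hd (i, s) = j.
Proof. by case/andP => c /eqP. Qed.

Lemma vpath_cat (i : 'I_r.+1) s1 s2 :
  vpath (i, s1 ++ s2) = vpath (i, s1) + vpath (i, s2) :> {ffun Q1 -> int}.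
Proof. by apply/ffunP => a; rewrite !ffunE /= count_cat PoszD. Qed.

Lemma vpath_cat2B (i : 'I_r.+1) w u (p1 p2 : qpath r Q1) :
  vpath (i, w ++ p1.2 ++ u) - vpath (i, w ++ p2.2 ++ u) = vpath p1 - vpath p2.
Proof. by apply/ffunP => a; rewrite !ffunE /= !count_cat !PoszD; ring. Qed.

Lemma sum_vpath (p : qpath r Q1) (c : Q1 -> int) :
  \sum_a vpath p a * c a = \sum_(a <- p.2) c a.
Proof.
case: p => i s /=; elim: s => [|b s IH].
  by rewrite big_nil big1 // => a _; rewrite ffunE mul0r.
rewrite big_cons -IH -(sum_mul_eq c b) -big_split /=.
apply: eq_bigr => a _; rewrite !ffunE /= PoszD mulrDl [c a * _]mulrC eq_sym.
by case: (a == b).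
Qed.

Lemma sum_boundary_chain i s l : chain hd tl i s ->
  \sum_(a <- s) ((hd a == l)%:R - (tl a == l)%:R : int) =
  (last i [seq hd a | a <- s] == l)%:R - (i == l)%:R.
Proof.
elim: s i => [|a s IH] i /=; first by rewrite big_nil subrr.
by case/andP => /eqP <- /IH; rewrite big_cons => ->; ring.
Qed.

Lemma pdiv_vpath (p : qpath r Q1) rho :
  (Defs.pdiv dv p rho)%:Z = \sum_a vpath p a * (dv a rho)%:Z.
Proof. by rewrite sum_vpath /Defs.pdiv -(big_morph Posz PoszD erefl). Qed.

Lemma boundary_vpath (p : qpath r Q1) l : validp hd tl p ->
  \sum_a vpath p a * ((hd a == l)%:R - (tl a == l)%:R) =
  (phead hd p == l)%:R - (ptail p == l)%:R.
Proof. by rewrite sum_vpath; apply: sum_boundary_chain. Qed.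

End Walks.

Section KernelOfPi.
Variables (r d : nat) (Q1 : finType) (hd tl : Q1 -> 'I_r.+1)
  (dv : Q1 -> 'I_d -> nat).

Lemma in_ker_pi_vpathB (p1 p2 : qpath r Q1) :
  validp hd tl p1 -> validp hd tl p2 ->
  ptail p1 = ptail p2 -> phead hd p1 = phead hd p2 ->
  (forall rho, Defs.pdiv dv p1 rho = Defs.pdiv dv p2 rho) ->
  in_ker_pi hd tl dv (vpath p1 - vpath p2).
Proof.
move=> v1 v2 t12 h12 d12; split=> [l|rho].
  under eq_bigr do rewrite ffunBE mulrBl.
  by rewrite sumrB !boundary_vpath // t12 h12 subrr.
under eq_bigr do rewrite ffunBE mulrBl.
by rewrite sumrB -!pdiv_vpath d12 subrr.
Qed.

Lemma in_ker_pi_pdiv (p1 p2 : qpath r Q1) :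
  in_ker_pi hd tl dv (vpath p1 - vpath p2) ->
  forall rho, Defs.pdiv dv p1 rho = Defs.pdiv dv p2 rho.
Proof.
move=> [_ Kdiv] rho; apply/eqP; rewrite -eqz_nat -subr_eq0 !pdiv_vpath -sumrB.
by apply/eqP; rewrite -[RHS](Kdiv rho); apply: eq_bigr => a _; rewrite ffunBE mulrBl.
Qed.

Lemma in_dW_ends (q p : qpath r Q1) : in_dW hd tl dv q p ->
  [/\ ptail p = phead hd q, phead hd p = ptail q &
      forall rho, (Defs.pdiv dv p rho + Defs.pdiv dv q rho = 1)%N].
Proof.
case=> c [+ [_]]; rewrite /Defs.pcomp.
case: (phead hd q =P ptail p) => // qp [<-] cyc_c div_c; split=> // [|rho].
  by move: cyc_c; rewrite /phead /ptail /= map_cat last_cat -/(phead hd q) qp.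
by rewrite -(div_c rho) /Defs.pdiv big_cat addnC.
Qed.

Lemma dW_pair_ends (q p1 p2 : qpath r Q1) : dW_pair hd tl dv q p1 p2 ->
  [/\ ptail p1 = ptail p2, phead hd p1 = phead hd p2 &
      forall rho, Defs.pdiv dv p1 rho = Defs.pdiv dv p2 rho].
Proof.
case=> [[_ v1 v2 _] [dWq _]].
have [t1 h1 d1] := in_dW_ends ((dWq p1 v1).2 (or_introl erefl)).
have [t2 h2 d2] := in_dW_ends ((dWq p2 v2).2 (or_intror erefl)).
split; [by rewrite t1 t2 | by rewrite h1 h2 |] => rho.
by apply/eqP; rewrite -(eqn_add2r (Defs.pdiv dv q rho)) d1 d2.
Qed.

Lemma in_L_ker_pi x : in_L hd tl dv x -> in_ker_pi hd tl dv x.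
Proof.
elim=> {x} [|x y _ [Kx1 Kx2] _ [Ky1 Ky2]|x _ [Kx1 Kx2]|q p1 p2 dWq].
- by split=> [l|rho]; rewrite big1 // => a _; rewrite ffunE mul0r.
- split=> [l|rho]; under eq_bigr do rewrite ffunE mulrDl;
    by rewrite big_split /= ?Kx1 ?Ky1 ?Kx2 ?Ky2 addr0.
- split=> [l|rho]; under eq_bigr do rewrite ffunE mulNr;
    by rewrite sumrN ?Kx1 ?Kx2 oppr0.
- have [t12 h12 d12] := dW_pair_ends dWq.
  by case: dWq => [[_ v1 v2 _] _]; apply: in_ker_pi_vpathB.
Qed.

End KernelOfPi.

Section PathIdeals.
Variables (r d : nat) (Q1 : finType) (hd tl : Q1 -> 'I_r.+1)
  (dv : Q1 -> 'I_d -> nat) (k : fieldType).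
Implicit Types (p u w : qpath r Q1).

Lemma mul3E u s w : mul3 hd u s w =
  if (phead hd w == ptail s) && (phead hd s == ptail u)
  then Some (ptail w, w.2 ++ s.2 ++ u.2) else None.
Proof.
rewrite /mul3 /Defs.pcomp; case: (phead hd w =P ptail s) => //= ws.
have -> : phead hd (ptail w, w.2 ++ s.2) = phead hd s.
  by rewrite /phead /= map_cat last_cat -/(phead hd w) ws.
by rewrite catA.
Qed.

Lemma sum_ind_opt (U : seq (qpath r Q1)) (B : pred (qpath r Q1)) o : uniq U ->
  \sum_(x <- U | B x) ind_opt k o x =
  if o is Some y then ((y \in U) && B y)%:R else 0.
Proof.
case: o => [y|] uniqU; last by rewrite big1.
elim: U uniqU => [|x U IH] /=; first by rewrite big_nil.
case/andP => xU /IH{}IH; rewrite big_cons IH in_cons.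
case: (eqVneq y x) => [->|yx] /=; last by case: (B x); rewrite ?add0r.
by rewrite (negPf xU); case: (B x); rewrite ?addr0.
Qed.

Lemma in_ideal_generator (S : qpath r Q1 * qpath r Q1 -> Prop) s :
  S s -> ptail s.1 = ptail s.2 -> phead hd s.1 = phead hd s.2 ->
  in_ideal hd tl S (fun x => ind_opt k (Some s.1) x - ind_opt k (Some s.2) x).
Proof.
move=> Ss t12 h12.
exists [:: (1, (phead hd s.1, [::]), s, (ptail s.1, [::]))]; split.
  by move=> t; rewrite inE => /eqP->.
move=> x; rewrite big_seq1 mul1r /binom_term !mul3E /= !cats0.
by case: s t12 h12 {Ss} => [[i1 s1] [i2 s2]] /= <- <-; rewrite !eqxx.
Qed.

Section ClassSum.
Variables (S : qpath r Q1 * qpath r Q1 -> Prop) (B : pred (qpath r Q1)).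
Hypothesis S_ends : forall s, S s ->
  ptail s.1 = ptail s.2 /\ phead hd s.1 = phead hd s.2.
Hypothesis B_invariant : forall s (i : 'I_r.+1) pre post, S s ->
  B (i, pre ++ s.1.2 ++ post) = B (i, pre ++ s.2.2 ++ post).

Lemma binom_term_class_sum (U : seq (qpath r Q1)) s u w : uniq U -> S s ->
  {subset pmap id [:: mul3 hd u s.1 w; mul3 hd u s.2 w] <= U} ->
  \sum_(x <- U | B x) binom_term hd k s u w x = 0.
Proof.
move=> uniqU Ss sub; have [t12 h12] := S_ends Ss.
rewrite sumrB !sum_ind_opt //; move: sub; rewrite !mul3E -t12 -h12.
case: ifP => [_ sub|_ _]; last by rewrite subrr.
rewrite (sub _ (mem_head _ _)) (sub _ (mem_last _ _)) /=.
by rewrite B_invariant // subrr.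
Qed.

(* The coefficient sum over the paths satisfying B is a linear form that kills
   the ideal generated by S; it is evaluated over any finite set of paths large
   enough to contain the support of f. *)
Lemma in_ideal_class_sum (f : qpath r Q1 -> k) : in_ideal hd tl S f ->
  forall X : seq (qpath r Q1),
  exists U, [/\ uniq U, {subset X <= U} & \sum_(x <- U | B x) f x = 0].
Proof.
case=> l [Sl fE] X.
pose products (t : k * qpath r Q1 * (qpath r Q1 * qpath r Q1) * qpath r Q1) :=
  pmap id [:: mul3 hd t.1.1.2 t.1.2.1 t.2; mul3 hd t.1.1.2 t.1.2.2 t.2].
pose U := undup (X ++ flatten [seq products t | t <- l]).
exists U; split=> [|x xX|]; first exact: undup_uniq.
  by rewrite mem_undup mem_cat xX.
rewrite (eq_bigr _ (fun x _ => fE x)) exchange_big.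
apply: big1_seq => t /andP[_ t_l]; have [_ St _] := Sl t t_l.
rewrite -mulr_sumr binom_term_class_sum ?mulr0 ?undup_uniq // => y yt.
by rewrite mem_undup mem_cat; apply/orP; right; apply/flatten_mapP; exists t.
Qed.

End ClassSum.

Lemma in_L_trans x y z :
  in_L hd tl dv (x - y) -> in_L hd tl dv (y - z) -> in_L hd tl dv (x - z).
Proof. by move=> Lxy /(LD Lxy); rewrite addrA subrK. Qed.

Lemma in_L_sym x y : in_L hd tl dv (x - y) -> in_L hd tl dv (y - x).
Proof. by move/LN; rewrite opprB. Qed.

Lemma in_ideal_gensW_in_L p p' :
  in_ideal hd tl (gensW hd tl dv)
    (fun x => ind_opt k (Some p) x - ind_opt k (Some p') x) ->
  in_L hd tl dv (vpath p - vpath p').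
Proof.
pose B (x : qpath r Q1) :=
  if excluded_middle_informative (in_L hd tl dv (vpath p - vpath x))
  then true else false.
have BP x : reflect (in_L hd tl dv (vpath p - vpath x)) (B x).
  by rewrite /B; case: excluded_middle_informative => ?; constructor.
move=> /(in_ideal_class_sum (B := B)) /(_ [:: p; p']) [].
- by move=> s [q /dW_pair_ends[]].
- move=> s i pre post [q /Lgen]; rewrite -(vpath_cat2B i pre post) => Ls.
  by apply/BP/BP => Lx; apply: in_L_trans Lx _; last apply: in_L_sym.
move=> U [uniqU sub]; rewrite sumrB !sum_ind_opt //.
rewrite (sub _ (mem_head _ _)) (sub _ (mem_last _ _)) /=.
have -> : B p by apply/BP; rewrite subrr; apply: L0.
by move=> /eqP; rewrite subr_eq0; case: BP => // _; rewrite oner_eq0.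
Qed.

End PathIdeals.

Section Connectivity.
Variables (n d r : nat) (v : 'I_d -> 'I_n -> int) (D' : 'I_r.+1 -> 'I_d -> int)
  (Q1 : finType) (hd tl : Q1 -> 'I_r.+1) (dv : Q1 -> 'I_d -> nat).
Hypotheses (gor : gorenstein v) (coll : collection_ok v D')
  (quiv : is_quiver_of_sections v D' hd tl dv).

Lemma pairing_scale (u : 'I_n -> int) (m : int) rho :
  pairing v (fun t => m * u t) rho = m * pairing v u rho.
Proof. by rewrite /pairing mulr_sumr; apply: eq_bigr => t _; rewrite mulrA. Qed.

Lemma hom_section_exists i j : exists E, hom_section v D' i j E.
Proof.
have [u0 u0E] := gor.
pose c rho := D' j rho - D' i rho; pose m := \sum_rho `|c rho|.
have c_m rho : 0 <= c rho + m.
  have : `|c rho| <= m by rewrite /m (bigD1 rho) //= lerDl sumr_ge0.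
  by have := ler_norm (- c rho); rewrite normrN; lra.
exists (fun rho => absz (c rho + m)), (fun t => m * u0 t) => rho.
by rewrite gez0_abs // pairing_scale u0E mulr1.
Qed.

Lemma hom_section_sum_gt0 i j E : hom_section v D' i j E -> i != j ->
  (0 < \sum_rho E rho)%N.
Proof.
move=> [u uE] ij; rewrite lt0n sum_nat_eq0; apply/negP => /forallP E0.
case: (coll.2 i j ij); exists u => rho.
by move: (uE rho); rewrite (eqP (E0 rho)); lia.
Qed.

Lemma hom_section_walk i j E : hom_section v D' i j E ->
  exists s, walk hd tl i s j.
Proof.
have [N] := ubnP (\sum_rho E rho)%N; elim: N => // N IH in i j E *.
rewrite ltnS => sumE HE.
case: (eqVneq i j) => [<-|ij]; first by exists [::]; rewrite /walk eqxx.
have /forallPn[rho /= Erho] : ~~ [forall (rho | true), E rho == 0%N].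
  by rewrite -sum_nat_eq0 -lt0n (hom_section_sum_gt0 HE ij).
case: (classic (irreducible_section v D' i j E)) => [irr|red].
  have [_ arrows _] := quiv; have [a [<- <- _]] := arrows _ _ _ irr.
  by exists [:: a]; rewrite /walk /= !eqxx.
have [l [li lj [E1 [E2 [H1 H2 E12]]]]] : exists l, [/\ l != i, l != j &
    exists E1 E2, [/\ hom_section v D' i l E1, hom_section v D' l j E2 &
      forall rho, E rho = (E1 rho + E2 rho)%N]].
  by apply: NNPP => dec; apply: red; split=> //; exists rho.
have sumE12 : (\sum_rho E rho = \sum_rho E1 rho + \sum_rho E2 rho)%N.
  by rewrite -big_split; apply: eq_bigr => rho' _; rewrite E12.
have [s1 w1] : exists s, walk hd tl i s l.
  by apply: (IH _ _ E1) H1; have := hom_section_sum_gt0 H2 lj; lia.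
have [s2 w2] : exists s, walk hd tl l s j.
  apply: (IH _ _ E2) H2; move: (hom_section_sum_gt0 H1).
  by rewrite eq_sym => /(_ li); lia.
by exists (s1 ++ s2); apply: walk_cat w1 w2.
Qed.

Lemma quiver_connected i j : exists s, walk hd tl i s j.
Proof. by have [E HE] := hom_section_exists i j; apply: hom_section_walk HE. Qed.

End Connectivity.

Section CycleDifferences.
Variables (r : nat) (Q1 : finType) (hd tl : Q1 -> 'I_r.+1).
Hypothesis connected : forall i j, exists s, walk hd tl i s j.
Local Notation base := (ord0 : 'I_r.+1).

Definition cycle_diff (y : {ffun Q1 -> int}) : Prop :=
  exists s s', [/\ walk hd tl base s base, walk hd tl base s' base &
    y = vpath (base, s) - vpath (base, s')].

Lemma cycle_diff0 : cycle_diff 0.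
Proof. by exists [::], [::]; rewrite /walk eqxx subrr. Qed.

Lemma cycle_diffD y1 y2 : cycle_diff y1 -> cycle_diff y2 -> cycle_diff (y1 + y2).
Proof.
move=> [s1 [s1' [c1 c1' ->]]] [s2 [s2' [c2 c2' ->]]].
exists (s1 ++ s2), (s1' ++ s2').
split; [exact: walk_cat c1 c2 | exact: walk_cat c1' c2' |].
by rewrite !vpath_cat opprD addrACA.
Qed.

Lemma cycle_diffN y : cycle_diff y -> cycle_diff (- y).
Proof. by move=> [s [s' [c c' ->]]]; exists s', s; rewrite opprB. Qed.

Lemma cycle_diffMz y z : cycle_diff y -> cycle_diff (y *~ z).
Proof.
move=> cy; have cyn m : cycle_diff (y *+ m).
  by elim: m => [|m IH]; [exact: cycle_diff0 | rewrite mulrS; apply: cycle_diffD].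
by case: z => m; [rewrite -pmulrn | rewrite NegzE mulrNz -pmulrn; apply: cycle_diffN].
Qed.

Lemma sum_potential_boundary (x : {ffun Q1 -> int}) (phi : 'I_r.+1 -> int) :
  (forall i, \sum_a x a * ((hd a == i)%:R - (tl a == i)%:R) = 0) ->
  \sum_a x a * (phi (hd a) - phi (tl a)) = 0.
Proof.
move=> bd0.
rewrite (eq_bigr (fun a => \sum_i phi i * (x a * ((hd a == i)%:R - (tl a == i)%:R)))).
  by rewrite exchange_big big1 //= => i _; rewrite -mulr_sumr bd0 mulr0.
move=> a _.
rewrite -(sum_mul_eq phi (hd a)) -(sum_mul_eq phi (tl a)) -sumrB mulr_sumr.
by apply: eq_bigr => i _; rewrite [hd a == i]eq_sym [tl a == i]eq_sym; ring.
Qed.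

Definition walk_from_base i := xchoose (connected base i).
Definition walk_to_base i := xchoose (connected i base).

Lemma cycle_diff_arrow a :
  cycle_diff (vpath (base, [:: a]) + vpath (base, walk_from_base (tl a))
              - vpath (base, walk_from_base (hd a))).
Proof.
have from_tl := xchooseP (connected base (tl a)).
have from_hd := xchooseP (connected base (hd a)).
have to_hd := xchooseP (connected (hd a) base).
have arrow_a : walk hd tl (tl a) [:: a] (hd a) by rewrite /walk /= !eqxx.
exists (walk_from_base (tl a) ++ [:: a] ++ walk_to_base (hd a)),
       (walk_from_base (hd a) ++ walk_to_base (hd a)); split.
- by apply: walk_cat from_tl (walk_cat arrow_a to_hd).
- exact: walk_cat from_hd to_hd.
by apply/ffunP => b; rewrite !ffunE /= !count_cat !PoszD; ring.
Qed.

(* x is the sum of its coefficients times the cycle differences of the arrows;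
   the walks from the base cancel out because x has zero boundary. *)
Lemma boundary0_cycle_diff (x : {ffun Q1 -> int}) :
  (forall i, \sum_a x a * ((hd a == i)%:R - (tl a == i)%:R) = 0) ->
  cycle_diff x.
Proof.
move=> bd0.
suff -> : x = \sum_a (vpath (base, [:: a]) + vpath (base, walk_from_base (tl a))
                       - vpath (base, walk_from_base (hd a))) *~ x a.
  by apply: big_ind => [|y1 y2|a _]; [exact: cycle_diff0 | exact: cycle_diffD |
    apply/cycle_diffMz/cycle_diff_arrow].
apply/ffunP => b; rewrite sum_ffunE.
pose phi i := (count_mem b (walk_from_base i))%:Z.
under eq_bigr do rewrite ffunMzE !ffunE /= addn0 mulrzz.
rewrite -[LHS]subr0 -[0 in LHS](sum_potential_boundary phi bd0).
rewrite -(sum_mul_eq x b) -sumrB; apply: eq_bigr => a _.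
by rewrite /phi; case: (a == b); ring.
Qed.

End CycleDifferences.

Theorem lemma3p14 (k : closedFieldType) (n d r : nat)
  (v : 'I_d -> 'I_n -> int) (D' : 'I_r.+1 -> 'I_d -> int)
  (Q1 : finType) (hd tl : Q1 -> 'I_r.+1) (dv : Q1 -> 'I_d -> nat) :
  toric_cone_data v -> gorenstein v -> collection_ok v D' ->
  is_quiver_of_sections v D' hd tl dv ->
  consistent hd tl dv k ->
  forall x : {ffun Q1 -> int}, in_ker_pi hd tl dv x <-> in_L hd tl dv x.
Proof.
move=> _ gor coll quiv cons x; split; last exact: in_L_ker_pi.
move=> Kx; have connected := quiver_connected gor coll quiv.
have [c [c' [wc wc' x_cc']]] := boundary0_cycle_diff connected Kx.1.
move: Kx; rewrite x_cc' => /in_ker_pi_pdiv div_cc'.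
have [[vc hc] [vc' hc']] := (walk_validp wc, walk_validp wc').
have ends_cc' : phead hd (ord0, c) = phead hd (ord0, c') by rewrite hc hc'.
have gens_cc' : gensE hd tl dv ((ord0, c), (ord0, c')) by split.
apply: (in_ideal_gensW_in_L (k := k)); apply/cons.
exact: (in_ideal_generator _ _ gens_cc' erefl ends_cc').
Qed.
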